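(* Let $S$ be a finite set of positive integers with at least $3$ elements, and suppose there are $a,b\in S$ with $a\ne b$ and $b\mid a$. Then $\Theta(S)\le\Theta(S\setminus\{b\})$, i.e. the modulus $b$ does not increase the robustness bound and may be deleted.
   Context: For a finite set $T$ of positive integers with at least two elements, the (single-stage) robustness bound is $\Theta(T)=\max_{x\in T}\min_{y\in T,\,y\ne x}\gcd(x,y)/4$. *)

From mathcomp Require Import all_boot all_order all_algebra.
Set Implicit Arguments. Unset Strict Implicit. Unset Printing Implicit Defensive.
Import GRing.Theory Num.Theory.

(* A finite set T of positive integers is represented by a duplicate-free
   sequence of nats (order irrelevant).  *)

(* min_{y in T, y <> x} gcd(x,y).  The seed value x is harmless: gcd(x,y) <= x
   for x > 0, and T has at least one y <> x whenever |T| >= 2. *)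
Definition mingcd (T : seq nat) (x : nat) : nat :=
  \big[minn/x]_(y <- T | y != x) gcdn x y.

Definition Theta (T : seq nat) : rat :=
  ((\max_(x <- T) mingcd T x)%:R / 4%:R)%R.

From mathcomp Require Import all_boot all_order all_algebra.
Import GRing.Theory Num.Theory.

(* If b divides a then gcd(b, y) divides gcd(a, y), so the minimal gcd of b
   in S is at most the minimal gcd of a in any subset of S; taking a = b, the
   minimal gcd of every x only grows on passing to a subset.  Hence, in S
   minus b, the element a takes over the role of b and every other element
   keeps its own, so the maximum cannot drop. *)

Lemma mingcd_geP (c : nat) (T : seq nat) (x : nat) :
  (c <= mingcd T x) = (c <= x) && all (fun y => (y != x) ==> (c <= gcdn x y)) T.
Proof.
rewrite /mingcd; elim: T => [|y T IH]; first by rewrite big_nil andbT.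
rewrite big_cons /=; case: (y != x) => //=.
by rewrite leq_min IH; case: (c <= gcdn x y); rewrite ?andbF.
Qed.

Lemma mingcd_le_seed (T : seq nat) (x : nat) : mingcd T x <= x.
Proof. by have := mingcd_geP (mingcd T x) T x; rewrite leqnn => /esym/andP[]. Qed.

Lemma mingcd_le_gcd {T : seq nat} {x y : nat} :
  y \in T -> y != x -> mingcd T x <= gcdn x y.
Proof.
move=> yT yx; have := mingcd_geP (mingcd T x) T x.
by rewrite leqnn => /esym/andP[_ /allP/(_ y yT)]; rewrite yx.
Qed.

Lemma mingcd_dvdn_sub (T T' : seq nat) (a b : nat) :
  0 < a -> b %| a -> {subset T' <= T} -> mingcd T b <= mingcd T' a.
Proof.
move=> a_gt0 ba sub; rewrite mingcd_geP.
have le_b : mingcd T b <= b := mingcd_le_seed T b.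
apply/andP; split; first exact: leq_trans le_b (dvdn_leq a_gt0 ba).
apply/allP => y /sub yT; apply/implyP => _.
have [->|yb] := eqVneq y b; first by rewrite (gcdn_idPr ba).
apply: (leq_trans (mingcd_le_gcd yT yb)).
by rewrite dvdn_leq ?gcdn_gt0 ?a_gt0 // dvdn_gcd dvdn_gcdr (dvdn_trans (dvdn_gcdl _ _)).
Qed.

Lemma Theta_le (S S' : seq nat) :
  (forall x, x \in S -> exists2 x', x' \in S' & mingcd S x <= mingcd S' x') ->
  (Theta S <= Theta S')%R.
Proof.
move=> dom; rewrite /Theta ler_pM2r ?invr_gt0 ?ltr0n // ler_nat.
apply/bigmax_leqP_seq => x /dom [x' x'S' le_x] _.
exact: (leq_trans le_x (leq_bigmax_seq _ x'S' _)).
Qed.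

Theorem corollary2 (S : seq nat) (a b : nat) :
  uniq S -> all (fun x => 0 < x) S -> 3 <= size S ->
  a \in S -> b \in S -> a != b -> b %| a ->
  (Theta S <= Theta (rem b S))%R.
Proof.
move=> uS /allP pos _ aS _ ab ba.
have sub : {subset rem b S <= S} by move=> y /mem_rem.
apply: Theta_le => x xS; have [->|xb] := eqVneq x b.
- exists a; first by rewrite mem_rem_uniq // inE ab.
  exact: mingcd_dvdn_sub (pos a aS) ba sub.
- exists x; first by rewrite mem_rem_uniq // inE xb.
  exact: mingcd_dvdn_sub (pos x xS) (dvdnn x) sub.
Qed.
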